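(* Let $M_\varphi$ be a hyperbolic once-punctured torus bundle with fibre $S$. Then the image of the restriction map $r\colon X(M_\varphi)\to X(S)$ equals $X_\varphi(S)$. Moreover, $X_\varphi(S)$ contains at most finitely many characters of reducible representations.
   Context: $\pi_1(M_\varphi)=\langle t,a,b\mid t^{-1}at=\varphi(a), t^{-1}bt=\varphi(b)\rangle$ with $a,b$ free generators of $\pi_1(S)$, $t$ a meridian, and $\varphi_*\in\mathrm{SL}(2,\mathbb{Z})$ the induced map on $H_1(S)$, satisfying $|\operatorname{tr}\varphi_*|>2$. $X(N)$ denotes the $\mathrm{SL}(2,\mathbb{C})$-character variety. $X(S)\cong\mathbb{C}^3$ via $(\operatorname{tr}\rho(a),\operatorname{tr}\rho(b),\operatorname{tr}\rho(ab))$; $X_\varphi(S)$ is the fixed set of the polynomial automorphism of $X(S)$ induced by $\varphi$ ($\chi\mapsto\chi\circ\varphi$). $r$ is restriction to $\pi_1(S)$. *)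

From HB Require Import structures.
From mathcomp Require Import all_boot all_order all_algebra.
From mathcomp Require Import Rstruct complex.
From Stdlib Require List.
Set Implicit Arguments. Unset Strict Implicit. Unset Printing Implicit Defensive.
Import Order.TTheory GRing.Theory Num.Theory.
Local Open Scope ring_scope.

Definition CC : Type := complex Rdefinitions.R.
Definition CCc : numClosedFieldType := CC.

(** Words in the free group F2 = <a, b> = pi_1(S).  A letter is
    (g, e): g = false for a, g = true for b; e = true means inverse. *)
Definition letter := (bool * bool)%type.
Definition word := seq letter.

Definition inv_letter (l : letter) : letter := (l.1, ~~ l.2).
Definition inv_word (w : word) : word := rev (map inv_letter w).

Definition reduce (w : word) : word :=
  foldr (fun l r => match r with
                    | l' :: r' => if l' == inv_letter l then r' else l :: r
                    | [::] => [:: l]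
                    end) [::] w.

(** An endomorphism of F2 given by the images (pa, pb) of a and b. *)
Definition endo := (word * word)%type.

Definition subst_letter (phi : endo) (l : letter) : word :=
  let u := if l.1 then phi.2 else phi.1 in if l.2 then inv_word u else u.
Definition subst (phi : endo) (w : word) : word := flatten (map (subst_letter phi) w).

Definition gen_a : word := [:: (false, false)].
Definition gen_b : word := [:: (true, false)].

Definition is_F2_aut (phi : endo) : Prop :=
  exists psi : endo,
    reduce (subst phi (subst psi gen_a)) = gen_a /\
    reduce (subst phi (subst psi gen_b)) = gen_b /\
    reduce (subst psi (subst phi gen_a)) = gen_a /\
    reduce (subst psi (subst phi gen_b)) = gen_b.

Definition expsum (g : bool) (w : word) : int :=
  \sum_(l <- w | l.1 == g) (if l.2 then (-1) else 1).

(** phi_* in GL(2,Z): columns are the images of [a], [b] in H_1(S) = Z^2. *)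
Definition phi_star (phi : endo) : 'M[int]_2 :=
  \matrix_(i < 2, j < 2)
    expsum (i != ord0) (if j == ord0 then phi.1 else phi.2).

Definition SL2 (A : 'M[CCc]_2) : Prop := \det A = 1.

Definition eval_letter (A B : 'M[CCc]_2) (l : letter) : 'M[CCc]_2 :=
  let X := if l.1 then B else A in if l.2 then invmx X else X.
Definition eval_word (A B : 'M[CCc]_2) (w : word) : 'M[CCc]_2 :=
  foldr (fun l M => eval_letter A B l *m M) 1%:M w.

Definition char_of (A B : 'M[CCc]_2) : word -> CCc :=
  fun w => \tr (eval_word A B w).

Definition XS (chi : word -> CCc) : Prop :=
  exists A B, SL2 A /\ SL2 B /\ chi = char_of A B.

Definition XS_fixed (phi : endo) (chi : word -> CCc) : Prop :=
  XS chi /\ forall w, chi (subst phi w) = chi w.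

(** Representations of pi_1(M_phi) = <t,a,b | t^-1 a t = phi(a), t^-1 b t = phi(b)>
    into SL(2,C) are triples (T, A, B) satisfying the relations. *)
Definition rep_M (phi : endo) (T A B : 'M[CCc]_2) : Prop :=
  SL2 T /\ SL2 A /\ SL2 B /\
  invmx T *m A *m T = eval_word A B phi.1 /\
  invmx T *m B *m T = eval_word A B phi.2.

Definition restr_image (phi : endo) (chi : word -> CCc) : Prop :=
  exists T A B, rep_M phi T A B /\ chi = char_of A B.

(** A representation of F2 into SL(2,C) is reducible iff C^2 has an
    invariant line, i.e. A and B have a common eigenvector. *)
Definition reducible_rep (A B : 'M[CCc]_2) : Prop :=
  exists (v : 'cV[CCc]_2) (x y : CCc),
    v != 0 /\ A *m v = x *: v /\ B *m v = y *: v.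

Definition reducible_char (chi : word -> CCc) : Prop :=
  exists A B, SL2 A /\ SL2 B /\ reducible_rep A B /\ chi = char_of A B.

(* A representation (T, A, B) of pi_1(M_phi) restricts to a pair (A, B) whose
   image under phi is its conjugate by T, so restricted characters are
   phi-invariant.  Conversely let the character of (A, B) be phi-invariant.
   If (A, B) is irreducible, so is its image (A', B') under the automorphism
   phi, with the same traces of a, b and ba; in the basis (A v, v), v an
   eigenvector of BA, both pairs take a normal form depending only on these
   traces, so they are conjugate, and after rescaling the conjugator lies in
   SL(2,C) and is the image of t.  If (A, B) is reducible its character is that
   of a diagonal pair diag(x), diag(y), and the traces of a, b, ab force phi to
   act on (x, y) through the abelianisation as the identity or as inversion,
   realised by conjugating with 1 or with a rotation.  In that case
   (x, y)^(phi_* - e) = 1 for e = 1 or -1, so x and y are roots of unity of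
   order dividing det(phi_* - e) = 2 - e tr phi_*, which is nonzero because
   |tr phi_*| > 2; this leaves finitely many reducible fixed characters. *)

From HB Require Import structures.
From mathcomp Require Import all_boot all_order all_algebra.
From mathcomp Require Import Rstruct complex ring.
From Stdlib Require List.
From Stdlib Require Import FunctionalExtensionality Classical.
Import Order.TTheory GRing.Theory Num.Theory.
Local Open Scope ring_scope.
Set Implicit Arguments. Unset Strict Implicit.

Lemma ord2_cases (k : 'I_2) : k = 0 \/ k = 1.
Proof. by case: k => [[|[|//]]] ?; [left | right]; apply: val_inj. Qed.

Section Matrix2.

Variable R : comPzRingType.
Implicit Types M : 'M[R]_2.

Lemma matrix2P m (M N : 'M[R]_(2, m)) :
  (forall j, M 0 j = N 0 j) -> (forall j, M 1 j = N 1 j) -> M = N.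
Proof. by move=> E0 E1; apply/matrixP => i j; case: (ord2_cases i) => ->. Qed.

Lemma mulmx2E m M (N : 'M[R]_(2, m)) i j :
  (M *m N) i j = M i 0 * N 0 j + M i 1 * N 1 j.
Proof.
rewrite mxE !big_ord_recl big_ord0 addr0.
by have -> : lift ord0 ord0 = 1 :> 'I_2 by apply: val_inj.
Qed.

Lemma mxtrace_mx2 M : \tr M = M 0 0 + M 1 1.
Proof.
rewrite /mxtrace !big_ord_recl big_ord0 addr0.
by have -> : lift ord0 ord0 = 1 :> 'I_2 by apply: val_inj.
Qed.

Lemma det_mx2 M : \det M = M 0 0 * M 1 1 - M 0 1 * M 1 0.
Proof.
rewrite (expand_det_row _ 0) !big_ord_recl big_ord0 addr0.
rewrite /cofactor !det_mx11 !mxE /=.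
have -> : lift ord0 ord0 = 1 :> 'I_2 by apply: val_inj.
have -> : lift 1 ord0 = 0 :> 'I_2 by apply: val_inj.
rewrite /bump /= expr0 expr1; ring.
Qed.

Lemma Cayley_Hamilton_mx2 M : M *m M = \tr M *: M - \det M *: 1%:M.
Proof.
rewrite mxtrace_mx2 det_mx2.
by apply/matrix2P => j; case: (ord2_cases j) => ->; rewrite mulmx2E !mxE /=; ring.
Qed.

End Matrix2.

Section MatrixInv.

Variable R : comUnitRingType.

Lemma invmx_eq n (A B : 'M[R]_n) : B *m A = 1%:M -> invmx A = B.
Proof.
move=> BA1; have [_ uA] := mulmx1_unit BA1.
by rewrite -[invmx A]mul1mx -BA1 -mulmxA mulmxV // mulmx1.
Qed.

Lemma invmxM n (A B : 'M[R]_n) :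
  A \in unitmx -> B \in unitmx -> invmx (A *m B) = invmx B *m invmx A.
Proof.
move=> uA uB; apply: invmx_eq.
by rewrite mulmxA -(mulmxA _ _ A) mulVmx // mulmx1 mulVmx.
Qed.

Lemma invmx_conj n (T A : 'M[R]_n) : T \in unitmx -> A \in unitmx ->
  invmx (invmx T *m A *m T) = invmx T *m invmx A *m T.
Proof.
move=> uT uA; apply: invmx_eq.
by rewrite !mulmxA mulmxK // mulmxKV // mulVmx.
Qed.

Lemma mxtrace_conj n (T M : 'M[R]_n) :
  T \in unitmx -> \tr (invmx T *m M *m T) = \tr M.
Proof. by move=> uT; rewrite mxtrace_mulC mulmxA mulmxV // mul1mx. Qed.

Lemma invmx_det1 (M : 'M[R]_2) : \det M = 1 -> invmx M = \tr M *: 1%:M - M.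
Proof.
move=> detM; apply: invmx_eq.
by rewrite mulmxBl -scalemxAl mul1mx Cayley_Hamilton_mx2 detM scale1r opprB addrC subrK.
Qed.

Lemma conj_scale n (T M : 'M[R]_n) c :
  c \is a GRing.unit -> T \in unitmx ->
  invmx (c *: T) *m M *m (c *: T) = invmx T *m M *m T.
Proof.
move=> uc uT; rewrite invmxZ ?unitmxZ // -scalemxAl -scalemxAr -scalemxAl scalerA.
by rewrite mulrV // scale1r.
Qed.

Lemma conj_of_common_form n (M M' N P P' : 'M[R]_n) :
  P \in unitmx -> P' \in unitmx -> M *m P = P *m N -> M' *m P' = P' *m N ->
  invmx (P *m invmx P') *m M *m (P *m invmx P') = M'.
Proof.
move=> uP uP' MP MP'.
rewrite invmxM ?unitmx_inv // invmxK !mulmxA -(mulmxA _ M) MP.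
by rewrite mulmxA mulmxKV // -MP' mulmxK.
Qed.

End MatrixInv.

Section FieldFacts.

Variable F : fieldType.

Lemma eigenvalue_neq0 n (M : 'M[F]_n) (v : 'cV[F]_n) x :
  M \in unitmx -> v != 0 -> M *m v = x *: v -> x != 0.
Proof.
move=> uM nv Mv; apply: contraNneq nv => x0.
by rewrite -(mulKmx uM v) Mv x0 scale0r mulmx0.
Qed.

Lemma invmx_eigen n (M : 'M[F]_n) (v : 'cV[F]_n) x :
  M \in unitmx -> x != 0 -> M *m v = x *: v -> invmx M *m v = x^-1 *: v.
Proof.
move=> uM nx Mv.
have Ev : v = x *: (invmx M *m v) by rewrite scalemxAr -Mv mulKmx.
by rewrite [in RHS]Ev scalerA mulVf // scale1r.
Qed.

Lemma mxtrace_eigen_det1 (M : 'M[F]_2) (v : 'cV[F]_2) mu :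
  \det M = 1 -> v != 0 -> M *m v = mu *: v -> \tr M = mu + mu^-1.
Proof.
move=> detM nv Mv.
have uM : M \in unitmx by rewrite unitmxE detM unitr1.
have nmu := eigenvalue_neq0 uM nv Mv.
have := invmx_eigen uM nmu Mv.
rewrite invmx_det1 // mulmxBl -scalemxAl mul1mx Mv => Minv_v.
have : (\tr M - mu - mu^-1) *: v = 0 by rewrite !scalerBl Minv_v subrr.
move/eqP; rewrite scaler_eq0 (negbTE nv) orbF subr_eq0 subr_eq => /eqP ->.
by rewrite addrC.
Qed.

Lemma eigenvector_exists (M : 'M[F]_2) lam :
  lam ^+ 2 - \tr M * lam + \det M = 0 ->
  exists2 v : 'cV[F]_2, v != 0 & M *m v = lam *: v.
Proof.
move=> char_lam.
have : \det (M - lam%:M)^T == 0.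
  by rewrite det_tr det_mx2 !mxE /= -char_lam mxtrace_mx2 det_mx2; apply/eqP; ring.
case/det0P => u nu uM; exists u^T; first by rewrite trmx_eq0.
apply/eqP; rewrite -subr_eq0 -mul_scalar_mx -mulmxBl -trmx_eq0 trmx_mul trmxK.
by rewrite uM.
Qed.

Lemma add_invf_eq (X x : F) : X != 0 -> x != 0 ->
  X + X^-1 = x + x^-1 -> X = x \/ X = x^-1.
Proof.
move=> nX nx E.
have : (X - x) * (X - x^-1) = X * ((X + X^-1) - (x + x^-1)) by field; rewrite nX nx.
by rewrite E subrr mulr0 => /eqP; rewrite mulf_eq0 !subr_eq0 => /orP[] /eqP; tauto.
Qed.

Lemma add_invf_mixed (x y : F) : x != 0 -> y != 0 ->
  x * y + (x * y)^-1 = x / y + (x / y)^-1 -> x = x^-1 \/ y = y^-1.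
Proof.
move=> nx ny E.
have : (x - x^-1) * (y - y^-1) = (x * y + (x * y)^-1) - (x / y + (x / y)^-1).
  by field; rewrite nx ny.
by rewrite E subrr => /eqP; rewrite mulf_eq0 !subr_eq0 => /orP[] /eqP; tauto.
Qed.

Lemma add_invf_pair_eq (X Y x y : F) : X != 0 -> Y != 0 -> x != 0 -> y != 0 ->
  X + X^-1 = x + x^-1 -> Y + Y^-1 = y + y^-1 ->
  X * Y + (X * Y)^-1 = x * y + (x * y)^-1 ->
  (X = x /\ Y = y) \/ (X = x^-1 /\ Y = y^-1).
Proof.
move=> nX nY nx ny /(add_invf_eq nX nx)[]-> /(add_invf_eq nY ny)[]-> Exy;
  [by left | | | by right].
- have [x_inv | y_inv] := add_invf_mixed nx ny (esym Exy).
  + by right; rewrite -x_inv.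
  + by left; rewrite -y_inv.
- have : x * y + (x * y)^-1 = x / y + (x / y)^-1.
    by rewrite -Exy; field; rewrite nx ny.
  case/(add_invf_mixed nx ny) => [x_inv | y_inv].
  + by left; rewrite -x_inv.
  + by right; rewrite -y_inv.
Qed.

Lemma mulr_exprz_sub (x y : F) (p r e : int) : x != 0 ->
  x ^ p * y ^ r = x ^ e -> x ^ (p - e) * y ^ r = 1.
Proof. by move=> nx E; rewrite expfzDr // mulrAC E -expfzDr // subrr. Qed.

Lemma exprz_cramer (x y : F) (a b c d : int) : x != 0 -> y != 0 ->
  x ^ a * y ^ b = 1 -> x ^ c * y ^ d = 1 -> x ^ (a * d - b * c) = 1.
Proof.
move=> nx ny E1 E2.
have E1d : x ^ (a * d) * y ^ (b * d) = 1 by rewrite -!exprz_exp -expfzMl E1 exp1rz.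
have E2b : x ^ (c * b) * y ^ (d * b) = 1 by rewrite -!exprz_exp -expfzMl E2 exp1rz.
have Exx : x ^ (a * d) = x ^ (c * b).
  by apply: (mulIf (expfz_neq0 (b * d) ny)); rewrite E1d (mulrC b d) E2b.
by rewrite expfzDr // -invr_expz Exx (mulrC b c) mulfV // expfz_neq0.
Qed.

Lemma twisted_fixed_torsion (M : 'M[int]_2) (x y : F) (e : int) :
  x != 0 -> y != 0 ->
  x ^ M 0 0 * y ^ M 1 0 = x ^ e -> x ^ M 0 1 * y ^ M 1 1 = y ^ e ->
  let k := \det M - e * \tr M + e ^+ 2 in x ^ k = 1 /\ y ^ k = 1.
Proof.
move=> nx ny E1 E2 k.
have {}E1 := mulr_exprz_sub nx E1.
have {}E2 : y ^ (M 1 1 - e) * x ^ M 0 1 = 1.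
  by apply: mulr_exprz_sub => //; rewrite mulrC.
split.
- have -> : k = (M 0 0 - e) * (M 1 1 - e) - M 1 0 * M 0 1.
    by rewrite /k det_mx2 mxtrace_mx2; ring.
  by apply: (exprz_cramer nx ny E1); rewrite mulrC.
- have -> : k = (M 1 1 - e) * (M 0 0 - e) - M 0 1 * M 1 0.
    by rewrite /k det_mx2 mxtrace_mx2; ring.
  by apply: (exprz_cramer ny nx E2); rewrite mulrC.
Qed.

End FieldFacts.

Lemma exprz_abs_eq1 (R : unitRingType) (x : R) (k : int) :
  x ^ k = 1 -> x ^+ `|k|%N = 1.
Proof. by case: k => n // /eqP; rewrite invr_eq1 => /eqP. Qed.

Section FieldMatrices.

Variable F : fieldType.

Definition abel_letter (x y : F) (l : letter) : F :=
  let z := if l.1 then y else x in if l.2 then z^-1 else z.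

Definition abel_eval (x y : F) (w : word) : F :=
  foldr (fun l r => abel_letter x y l * r) 1 w.

Lemma abel_eval_neq0 x y w : x != 0 -> y != 0 -> abel_eval x y w != 0.
Proof.
move=> nx ny; elim: w => [|[[] []] w IH] /=; first exact: oner_neq0.
all: by rewrite mulf_neq0 // /abel_letter /= ?invr_eq0.
Qed.

Lemma abel_eval_expsum x y w : x != 0 -> y != 0 ->
  abel_eval x y w = x ^ expsum false w * y ^ expsum true w.
Proof.
move=> nx ny; elim: w => [|[g e] w IH]; first by rewrite /expsum !big_nil mulr1.
rewrite /= IH /expsum !big_cons /=.
by case: g; case: e; rewrite /abel_letter /= ?add0r !expfzDr // ?expr1z ?exprN1; ring.
Qed.

Definition diag2 (a : F) : 'M[F]_2 :=
  \matrix_(i, j) if i == j then (if i == 0 then a else a^-1) else 0.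

Lemma det_diag2 a : a != 0 -> \det (diag2 a) = 1.
Proof. by move=> na; rewrite det_mx2 !mxE /= mulfV // mulr0 subr0. Qed.

Lemma mxtrace_diag2 a : \tr (diag2 a) = a + a^-1.
Proof. by rewrite mxtrace_mx2 !mxE. Qed.

Lemma diag2M a b : diag2 a *m diag2 b = diag2 (a * b).
Proof.
by apply/matrix2P => j; case: (ord2_cases j) => ->; rewrite mulmx2E !mxE /= ?invfM; ring.
Qed.

Lemma diag2_1 : diag2 1 = 1%:M.
Proof. by apply/matrix2P => j; case: (ord2_cases j) => ->; rewrite !mxE /= ?invr1. Qed.

Lemma invmx_diag2 a : a != 0 -> invmx (diag2 a) = diag2 a^-1.
Proof. by move=> na; apply: invmx_eq; rewrite diag2M mulVf // diag2_1. Qed.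

Definition rot2 : 'M[F]_2 :=
  \matrix_(i, j) if i == j then 0 else (if i == 0 then 1 else -1).

Lemma det_rot2 : \det rot2 = 1.
Proof. by rewrite det_mx2 !mxE /=; ring. Qed.

Lemma rot2_conj_diag2 a : a != 0 -> invmx rot2 *m diag2 a *m rot2 = diag2 a^-1.
Proof.
move=> na; rewrite invmx_det1 ?det_rot2 // mxtrace_mx2 !mxE /= addr0 scale0r sub0r.
by apply/matrix2P => j; case: (ord2_cases j) => ->; rewrite !mulmx2E !mxE /= ?invrK; ring.
Qed.

Definition mx_of_cols (u v : 'cV[F]_2) : 'M[F]_2 :=
  \matrix_(i, j) if j == 0 then u i 0 else v i 0.

Lemma mulmx_cols (M : 'M[F]_2) u v :
  M *m mx_of_cols u v = mx_of_cols (M *m u) (M *m v).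
Proof.
apply/matrixP => i j; rewrite mulmx2E ![mx_of_cols _ _ _ _]mxE.
by case: (ord2_cases j) => -> /=; rewrite mulmx2E.
Qed.

Lemma mx_of_cols_mulmx u v (N : 'M[F]_2) :
  mx_of_cols u v *m N = mx_of_cols (N 0 0 *: u + N 1 0 *: v) (N 0 1 *: u + N 1 1 *: v).
Proof.
apply/matrixP => i j; rewrite mulmx2E !mxE.
by case: (ord2_cases j) => -> /=; ring.
Qed.

Lemma det_mx_of_cols u v : \det (mx_of_cols u v) = u 0 0 * v 1 0 - v 0 0 * u 1 0.
Proof. by rewrite det_mx2 !mxE /=; ring. Qed.

Lemma mx_of_cols_dependent u v :
  \det (mx_of_cols u v) = 0 -> v != 0 -> exists c, u = c *: v.
Proof.
rewrite det_mx_of_cols => /eqP; rewrite subr_eq0 => /eqP cross nv.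
have [v0 | v1] : v 0 0 != 0 \/ v 1 0 != 0.
  apply/orP; apply: contraNT nv => /norP[/negPn/eqP v0 /negPn/eqP v1].
  by apply/eqP/matrix2P => j; rewrite ord1 mxE.
- exists (u 0 0 / v 0 0); apply/matrix2P => j; rewrite ord1 mxE.
    by rewrite divfK.
  by rewrite mulrAC cross mulrAC divff // mul1r.
- exists (u 1 0 / v 1 0); apply/matrix2P => j; rewrite ord1 mxE.
    by rewrite mulrAC [u 1 0 * _]mulrC -cross mulfK.
  by rewrite divfK.
Qed.

(* The matrices of A and B in the basis (A v, v), where BA v = lam v, s = tr A
   in normal_A and s = tr B in normal_B. *)
Definition normal_A (s : F) : 'M[F]_2 :=
  \matrix_(i, j) if i == 0 then (if j == 0 then s else 1) else (if j == 0 then -1 else 0).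

Definition normal_B (lam s : F) : 'M[F]_2 :=
  \matrix_(i, j) if i == 0 then (if j == 0 then 0 else - lam^-1) else (if j == 0 then lam else s).

End FieldMatrices.

Lemma roots_of_unity_finite (C : closedFieldType) n : (0 < n)%N ->
  exists rs : seq C, forall x, x ^+ n = 1 -> x \in rs.
Proof.
move=> n_gt0; have [rs Ers] := closed_field_poly_normal ('X^n - 1 : {poly C}).
exists rs => x xn1.
have lc_neq0 : lead_coef ('X^n - 1 : {poly C}) != 0.
  by rewrite lead_coef_eq0 monic_neq0 // monicXnsubC.
by rewrite -root_prod_XsubC -(rootZ _ _ lc_neq0) -Ers /root !hornerE xn1 subrr.
Qed.

Lemma quadratic_root (C : numClosedFieldType) (b c : C) :
  exists lam : C, lam ^+ 2 - b * lam + c = 0.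
Proof.
set s := sqrtC (b ^+ 2 - 4 * c); exists ((b + s) / 2).
have -> : ((b + s) / 2) ^+ 2 - b * ((b + s) / 2) + c = (s ^+ 2 - (b ^+ 2 - 4 * c)) / 4.
  by field.
by rewrite /s sqrtCK subrr mul0r.
Qed.

Lemma scale_to_det1 (C : numClosedFieldType) (T : 'M[C]_2) :
  T \in unitmx -> exists2 c : C, c != 0 & \det (c *: T) = 1.
Proof.
rewrite unitmxE unitfE => nd; exists (sqrtC (\det T))^-1.
  by rewrite invr_eq0 sqrtC_eq0.
by rewrite detZ exprVn sqrtCK mulVf.
Qed.

Lemma SL2_unit A : SL2 A -> A \in unitmx.
Proof. by move=> detA; rewrite unitmxE detA unitr1. Qed.

Lemma SL2_mul A B : SL2 A -> SL2 B -> SL2 (A *m B).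
Proof. by rewrite /SL2 det_mulmx => -> ->; rewrite mulr1. Qed.

Lemma SL2_inv A : SL2 A -> SL2 (invmx A).
Proof. by rewrite /SL2 det_inv => ->; rewrite invr1. Qed.

Lemma SL2_eval A B w : SL2 A -> SL2 B -> SL2 (eval_word A B w).
Proof.
move=> HA HB; elim: w => [|[[] []] w IH] /=; first exact: det1.
all: by apply: SL2_mul; rewrite // /eval_letter /=; apply: SL2_inv.
Qed.

Lemma eval_letter_inv A B l : eval_letter A B (inv_letter l) = invmx (eval_letter A B l).
Proof. by case: l => [g []]; rewrite /eval_letter /= ?invmxK. Qed.

Lemma eval_cat A B u w : eval_word A B (u ++ w) = eval_word A B u *m eval_word A B w.
Proof. by elim: u => [|l u IH] /=; rewrite ?mul1mx // IH mulmxA. Qed.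

Section WordEval.

Variables A B : 'M[CCc]_2.
Hypotheses (uA : A \in unitmx) (uB : B \in unitmx).

Lemma unitmx_eval_letter l : eval_letter A B l \in unitmx.
Proof. by case: l => [[] []]; rewrite /eval_letter /= ?unitmx_inv. Qed.

Lemma unitmx_eval w : eval_word A B w \in unitmx.
Proof.
by elim: w => [|l w IH] /=; rewrite ?unitmx1 // unitmx_mul unitmx_eval_letter.
Qed.

Lemma eval_inv_word u : eval_word A B (inv_word u) = invmx (eval_word A B u).
Proof.
elim: u => [|l u IH]; first by rewrite /= invmx1.
rewrite /inv_word /= rev_cons -cats1 eval_cat -/(inv_word u) IH /= mulmx1.
by rewrite eval_letter_inv invmxM ?unitmx_eval_letter ?unitmx_eval.
Qed.

Lemma eval_subst phi w :
  eval_word A B (subst phi w) = eval_word (eval_word A B phi.1) (eval_word A B phi.2) w.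
Proof.
elim: w => [|[g e] w IH] //=.
rewrite /subst /= eval_cat -/(subst phi w) IH; congr (_ *m _).
by case: g; case: e; rewrite /subst_letter /eval_letter /= ?eval_inv_word.
Qed.

Lemma eval_reduce w : eval_word A B (reduce w) = eval_word A B w.
Proof.
elim: w => [|l w IH] //.
rewrite [RHS]/= -IH [reduce _]/= -/(reduce w).
case: (reduce w) => [|l' r'] //; case: eqP => [-> | _] //.
by rewrite [RHS]/= eval_letter_inv mulmxA mulmxV ?mul1mx ?unitmx_eval_letter.
Qed.

Lemma eval_conj T w : T \in unitmx ->
  eval_word (invmx T *m A *m T) (invmx T *m B *m T) w = invmx T *m eval_word A B w *m T.
Proof.
move=> uT; elim: w => [|[g e] w IH] /=; first by rewrite mulmx1 mulVmx.
have -> : eval_letter (invmx T *m A *m T) (invmx T *m B *m T) (g, e)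
          = invmx T *m eval_letter A B (g, e) *m T.
  by case: g; case: e; rewrite /eval_letter /= ?(invmx_conj uT uA) ?(invmx_conj uT uB).
by rewrite IH !mulmxA mulmxK.
Qed.

Lemma eval_common_eigen (v : 'cV[CCc]_2) x y w : x != 0 -> y != 0 ->
  A *m v = x *: v -> B *m v = y *: v -> eval_word A B w *m v = abel_eval x y w *: v.
Proof.
move=> nx ny Av Bv; elim: w => [|[g e] w IH] /=; first by rewrite mul1mx scale1r.
have Lv : eval_letter A B (g, e) *m v = abel_letter x y (g, e) *: v.
  by case: g; case: e;
    rewrite /eval_letter /abel_letter /= ?(invmx_eigen uA nx Av) ?(invmx_eigen uB ny Bv).
by rewrite -mulmxA IH -scalemxAr Lv scalerA mulrC.
Qed.

End WordEval.

Lemma char_of_subst A B phi w : A \in unitmx -> B \in unitmx ->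
  char_of A B (subst phi w) = char_of (eval_word A B phi.1) (eval_word A B phi.2) w.
Proof. by move=> uA uB; rewrite /char_of eval_subst. Qed.

Lemma char_of_common_eigen A B (v : 'cV[CCc]_2) x y w : SL2 A -> SL2 B -> v != 0 ->
  A *m v = x *: v -> B *m v = y *: v ->
  char_of A B w = abel_eval x y w + (abel_eval x y w)^-1.
Proof.
move=> HA HB nv Av Bv.
have nx := eigenvalue_neq0 (SL2_unit HA) nv Av.
have ny := eigenvalue_neq0 (SL2_unit HB) nv Bv.
apply: (mxtrace_eigen_det1 (SL2_eval w HA HB) nv).
exact: eval_common_eigen (SL2_unit HA) (SL2_unit HB) _ _ _ _ nx ny Av Bv.
Qed.

Lemma eval_diag2 (x y : CCc) w : x != 0 -> y != 0 ->
  eval_word (diag2 x) (diag2 y) w = diag2 (abel_eval x y w).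
Proof.
move=> nx ny; elim: w => [|[[] []] w IH] /=; first by rewrite diag2_1.
all: by rewrite IH /eval_letter /abel_letter /= ?invmx_diag2 // diag2M.
Qed.

Lemma char_of_diag2 (x y : CCc) w : x != 0 -> y != 0 ->
  char_of (diag2 x) (diag2 y) w = abel_eval x y w + (abel_eval x y w)^-1.
Proof. by move=> nx ny; rewrite /char_of eval_diag2 // mxtrace_diag2. Qed.

Lemma reducible_char_diag2 A B : SL2 A -> SL2 B -> reducible_rep A B ->
  exists x y : CCc, [/\ x != 0, y != 0 & char_of A B = char_of (diag2 x) (diag2 y)].
Proof.
move=> HA HB [v [x [y [nv [Av Bv]]]]].
have nx := eigenvalue_neq0 (SL2_unit HA) nv Av.
have ny := eigenvalue_neq0 (SL2_unit HB) nv Bv.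
exists x, y; split => //; apply: functional_extensionality => w.
by rewrite char_of_diag2 // (char_of_common_eigen w HA HB nv Av Bv).
Qed.

Lemma fixed_diag2_twist phi (x y : CCc) : x != 0 -> y != 0 ->
  (forall w, char_of (diag2 x) (diag2 y) (subst phi w) = char_of (diag2 x) (diag2 y) w) ->
  exists e : int, (e = 1 \/ e = -1) /\
    abel_eval x y phi.1 = x ^ e /\ abel_eval x y phi.2 = y ^ e.
Proof.
move=> nx ny fixed.
set X := abel_eval x y phi.1; set Y := abel_eval x y phi.2.
have nX : X != 0 by apply: abel_eval_neq0.
have nY : Y != 0 by apply: abel_eval_neq0.
have char_XY w : char_of (diag2 X) (diag2 Y) w = char_of (diag2 x) (diag2 y) w.
  by rewrite -fixed char_of_subst ?(SL2_unit (det_diag2 _)) // !eval_diag2.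
have := char_XY gen_a; have := char_XY gen_b; have := char_XY (gen_a ++ gen_b).
rewrite !char_of_diag2 //= /abel_letter /= !mulr1 => Exy Ey Ex.
case: (add_invf_pair_eq nX nY nx ny Ex Ey Exy) => [[-> ->] | [-> ->]].
- by exists 1; rewrite !expr1z; split; [left |].
- by exists (-1); rewrite !exprN1; split; [right |].
Qed.

Lemma diag2_twist_conj (x y : CCc) (e : int) : x != 0 -> y != 0 -> e = 1 \/ e = -1 ->
  exists T, [/\ SL2 T, invmx T *m diag2 x *m T = diag2 (x ^ e)
              & invmx T *m diag2 y *m T = diag2 (y ^ e)].
Proof.
move=> nx ny [-> | ->].
- by exists 1%:M; rewrite !expr1z invmx1 !mul1mx !mulmx1; split => //; exact: det1.
- by exists (@rot2 CCc); rewrite !exprN1 !rot2_conj_diag2 //; split => //; apply: det_rot2.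
Qed.

Lemma irreducible_basis_unit A B (v : 'cV[CCc]_2) lam : SL2 A -> SL2 B ->
  ~ reducible_rep A B -> v != 0 -> B *m A *m v = lam *: v ->
  mx_of_cols (A *m v) v \in unitmx.
Proof.
move=> HA HB irr nv BAv.
have uA := SL2_unit HA.
rewrite unitmxE unitfE; apply/eqP => /mx_of_cols_dependent /(_ nv) [c Av].
have nc := eigenvalue_neq0 uA nv Av.
apply: irr; exists v, c, (c^-1 * lam); do !split => //.
by rewrite -[v in LHS](mulKVmx uA) (invmx_eigen uA nc Av) mulmxA -scalemxAr BAv scalerA.
Qed.

Lemma irreducible_normal_form A B lam : SL2 A -> SL2 B -> ~ reducible_rep A B ->
  lam ^+ 2 - \tr (B *m A) * lam + 1 = 0 ->
  exists2 P, P \in unitmx &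
    A *m P = P *m normal_A (\tr A) /\ B *m P = P *m normal_B lam (\tr B).
Proof.
move=> HA HB irr char_lam.
have HBA := SL2_mul HB HA.
have [v nv BAv] : exists2 v : 'cV_2, v != 0 & B *m A *m v = lam *: v.
  by apply: eigenvector_exists; rewrite HBA.
have uBA := SL2_unit HBA.
have nlam := eigenvalue_neq0 uBA nv BAv.
exists (mx_of_cols (A *m v) v); first exact: irreducible_basis_unit BAv.
rewrite !mulmx_cols !mx_of_cols_mulmx !mxE /=; split.
- rewrite scale1r scale0r addr0 scaleN1r mulmxA Cayley_Hamilton_mx2 HA scale1r.
  by rewrite mulmxBl mul1mx -scalemxAl.
- rewrite scale0r add0r mulmxA BAv; congr mx_of_cols.
  have Binv_v : invmx B *m v = lam^-1 *: (A *m v).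
    have := invmx_eigen uBA nlam BAv.
    rewrite invmxM ?SL2_unit // -mulmxA => E.
    by rewrite -[LHS](mulKVmx (SL2_unit HA)) E scalemxAr.
  rewrite invmx_det1 // mulmxBl -scalemxAl mul1mx in Binv_v.
  by rewrite scaleNr -Binv_v opprB subrK.
Qed.

Lemma irreducible_conj A B A' B' : SL2 A -> SL2 B -> SL2 A' -> SL2 B' ->
  ~ reducible_rep A B -> ~ reducible_rep A' B' ->
  \tr A' = \tr A -> \tr B' = \tr B -> \tr (B' *m A') = \tr (B *m A) ->
  exists T, [/\ SL2 T, invmx T *m A *m T = A' & invmx T *m B *m T = B'].
Proof.
move=> HA HB HA' HB' irr irr' trA trB trBA.
have [lam char_lam] := quadratic_root (\tr (B *m A)) 1.
have char_lam' : lam ^+ 2 - \tr (B' *m A') * lam + 1 = 0 by rewrite trBA.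
have [P uP [AP BP]] := irreducible_normal_form HA HB irr char_lam.
have [P' uP' [AP' BP']] := irreducible_normal_form HA' HB' irr' char_lam'.
rewrite trA trB in AP' BP'.
have uT : P *m invmx P' \in unitmx by rewrite unitmx_mul uP unitmx_inv.
have [c nc detT] := scale_to_det1 uT.
exists (c *: (P *m invmx P')); split; rewrite // conj_scale ?unitfE //.
- exact: conj_of_common_form uP uP' AP AP'.
- exact: conj_of_common_form uP uP' BP BP'.
Qed.

Lemma irreducible_subst phi A B : is_F2_aut phi -> SL2 A -> SL2 B ->
  ~ reducible_rep A B -> ~ reducible_rep (eval_word A B phi.1) (eval_word A B phi.2).
Proof.
move=> [psi [psi_a [psi_b _]]] HA HB irr [v [x [y [nv [A'v B'v]]]]].
have [uA uB] := (SL2_unit HA, SL2_unit HB).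
have uA' := SL2_unit (SL2_eval phi.1 HA HB).
have uB' := SL2_unit (SL2_eval phi.2 HA HB).
have nx := eigenvalue_neq0 uA' nv A'v; have ny := eigenvalue_neq0 uB' nv B'v.
have eval_back g : reduce (subst phi (subst psi g)) = g ->
    eval_word (eval_word A B phi.1) (eval_word A B phi.2) (subst psi g) = eval_word A B g.
  by move=> Eg; rewrite -eval_subst // -eval_reduce // Eg.
apply: irr; exists v, (abel_eval x y (subst psi gen_a)), (abel_eval x y (subst psi gen_b)).
split => //; split.
- rewrite -[A in A *m v]mulmx1 -[A *m 1%:M]/(eval_word A B gen_a) -(eval_back _ psi_a).
  exact: eval_common_eigen.
- rewrite -[B in B *m v]mulmx1 -[B *m 1%:M]/(eval_word A B gen_b) -(eval_back _ psi_b).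
  exact: eval_common_eigen.
Qed.

Lemma restr_image_fixed phi chi : restr_image phi chi -> XS_fixed phi chi.
Proof.
case=> T [A [B [[HT [HA [HB [TA TB]]]] ->]]]; split; first by exists A, B.
move=> w; rewrite char_of_subst ?SL2_unit // -TA -TB /char_of.
by rewrite eval_conj ?mxtrace_conj ?SL2_unit.
Qed.

Lemma fixed_restr_image phi chi : is_F2_aut phi -> XS_fixed phi chi -> restr_image phi chi.
Proof.
move=> aut [[A [B [HA [HB ->]]]] fixed].
have [uA uB] := (SL2_unit HA, SL2_unit HB).
case: (classic (reducible_rep A B)) => [red | irr].
- have [x [y [nx ny Echar]]] := reducible_char_diag2 HA HB red.
  rewrite Echar in fixed *.
  have [e [e_pm [Ea Eb]]] := fixed_diag2_twist nx ny fixed.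
  have [T [HT TA TB]] := diag2_twist_conj nx ny e_pm.
  exists T, (diag2 x), (diag2 y); split => //.
  by rewrite /rep_M !eval_diag2 // Ea Eb; do !split => //; apply: det_diag2.
- set A' := eval_word A B phi.1; set B' := eval_word A B phi.2.
  have char' w : char_of A' B' w = char_of A B w by rewrite -char_of_subst.
  have [T [HT TA TB]] : exists T, [/\ SL2 T, invmx T *m A *m T = A' & invmx T *m B *m T = B'].
    apply: irreducible_conj => //; try exact: SL2_eval; first exact: irreducible_subst.
    + by have := char' gen_a; rewrite /char_of /= !mulmx1.
    + by have := char' gen_b; rewrite /char_of /= !mulmx1.
    + by have := char' [:: (true, false); (false, false)]; rewrite /char_of /= !mulmx1.
  by exists T, A, B.
Qed.

Lemma reducible_fixed_torsion phi chi : \det (phi_star phi) = 1 ->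
  XS_fixed phi chi -> reducible_char chi ->
  let k := (2 - \tr (phi_star phi)) * (2 + \tr (phi_star phi)) in
  exists x y : CCc, [/\ chi = char_of (diag2 x) (diag2 y), x ^ k = 1 & y ^ k = 1].
Proof.
move=> det1 [_ fixed] [A [B [HA [HB [red Echi]]]]] k; subst chi.
have [x [y [nx ny Echar]]] := reducible_char_diag2 HA HB red.
rewrite Echar in fixed.
have [e [e_pm [Ea Eb]]] := fixed_diag2_twist nx ny fixed.
set M := phi_star phi.
have [M00 M10 M01 M11] : [/\ M 0 0 = expsum false phi.1, M 1 0 = expsum true phi.1,
                            M 0 1 = expsum false phi.2 & M 1 1 = expsum true phi.2].
  by rewrite !mxE.
rewrite !abel_eval_expsum // -M00 -M10 -M01 -M11 in Ea Eb.
have [xk yk] := twisted_fixed_torsion nx ny Ea Eb.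
have -> : k = (\det M - e * \tr M + e ^+ 2) * (2 + e * \tr M).
  by rewrite det1 /k; case: e_pm => ->; ring.
by exists x, y; rewrite -!exprz_exp xk yk !exp1rz.
Qed.

Lemma mem_In (T : eqType) (x : T) (s : seq T) : x \in s -> List.In x s.
Proof.
by elim: s => [|a s IH] //; rewrite in_cons => /orP[/eqP-> | /IH]; [left | right].
Qed.

Lemma reducible_fixed_finite phi :
  \det (phi_star phi) = 1 -> 2 < `|\tr (phi_star phi)| ->
  exists l : list (word -> CCc),
    forall chi, XS_fixed phi chi -> reducible_char chi -> List.In chi l.
Proof.
move=> det1; set t := \tr (phi_star phi) => tr_gt2; set k := (2 - t) * (2 + t).
have k_gt0 : (0 < `|k|)%N.
  rewrite absz_gt0 mulf_neq0 // ?subr_eq0 ?addr_eq0; apply: contraTneq tr_gt2.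
    by move=> <-.
  by move=> /(congr1 -%R); rewrite opprK => <-; rewrite normrN.
have [rs roots] := roots_of_unity_finite CCc k_gt0.
exists [seq char_of (diag2 p.1) (diag2 p.2) | p <- [seq (a, b) | a <- rs, b <- rs]].
move=> chi fixed red.
have [x [y [-> xk yk]]] := reducible_fixed_torsion det1 fixed red.
apply: (List.in_map _ _ (x, y)); apply: mem_In; apply: allpairs_f;
  exact/roots/exprz_abs_eq1.
Qed.

Unset Implicit Arguments. Set Strict Implicit.
Theorem lemma3p1 (phi : endo)
  (Haut : is_F2_aut phi)
  (Hdet : \det (phi_star phi) = 1)
  (Hhyp : 2 < `|\tr (phi_star phi)|) :
  (forall chi : word -> CCc, restr_image phi chi <-> XS_fixed phi chi) /\
  (exists l : list (word -> CCc),
     forall chi, XS_fixed phi chi -> reducible_char chi -> List.In chi l).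
Proof.
split; last exact: reducible_fixed_finite.
by move=> chi; split; [apply: restr_image_fixed | apply: fixed_restr_image].
Qed.
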